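(* Let $\alpha,\beta>0$, let $c(\psi)=\sqrt{\alpha\cos^2\psi+\beta\sin^2\psi}$, let $p\ge0$ be an integer, let $C>0$ and $\theta\ge 1/2$, and let $X_{\Delta x}^p(\Omega)$ be the discontinuous piecewise polynomial space on the periodic mesh described in the context. Suppose $R,S,\psi:[0,T]\to X_{\Delta x}^p(\Omega)$ are differentiable in time and, for every $t\in[0,T]$, satisfy (with $c=c(\psi(x,t))$ inside integrals, $x$-derivatives taken cellwise, sums over $j=1,\dots,N$) $$\sum_j\int_{\Omega_j}R_t\phi\,dx+\sum_j\int_{\Omega_j}cR\phi_x\,dx-\sum_j\Big(\overline{c}_{j+1/2}\overline{R}_{j+1/2}+\tfrac12 s_{j+1/2}\llbracket R\rrbracket_{j+1/2}\Big)\phi^-_{j+1/2}+\sum_j\Big(\overline{c}_{j-1/2}\overline{R}_{j-1/2}+\tfrac12 s_{j-1/2}\llbracket R\rrbracket_{j-1/2}\Big)\phi^+_{j-1/2}=\mathcal{B}(\phi)-\sum_j\varepsilon_j\int_{\Omega_j}R_x\phi_x\,dx$$ for all $\phi\in X_{\Delta x}^p(\Omega)$, $$\sum_j\int_{\Omega_j}S_t\eta\,dx-\sum_j\int_{\Omega_j}cS\eta_x\,dx+\sum_j\Big(\overline{c}_{j+1/2}\overline{S}_{j+1/2}-\tfrac12 s_{j+1/2}\llbracket S\rrbracket_{j+1/2}\Big)\eta^-_{j+1/2}-\sum_j\Big(\overline{c}_{j-1/2}\overline{S}_{j-1/2}-\tfrac12 s_{j-1/2}\llbracket S\rrbracket_{j-1/2}\Big)\eta^+_{j-1/2}=\mathcal{B}(\eta)-\sum_j\varepsilon_j\int_{\Omega_j}S_x\eta_x\,dx$$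 for all $\eta\in X_{\Delta x}^p(\Omega)$, and $\sum_j\int_{\Omega_j}\psi_t\zeta\,dx=\sum_j\int_{\Omega_j}\frac{R+S}{2}\zeta\,dx$ for all $\zeta\in X_{\Delta x}^p(\Omega)$. Here, for a test function $\chi$, $$\mathcal{B}(\chi)=\tfrac12\sum_j\int_{\Omega_j}c(R\chi)_x\,dx-\tfrac12\sum_j\overline{c}_{j+1/2}R^-_{j+1/2}\chi^-_{j+1/2}+\tfrac12\sum_j\overline{c}_{j-1/2}R^+_{j-1/2}\chi^+_{j-1/2}-\tfrac12\sum_j\int_{\Omega_j}c(S\chi)_x\,dx+\tfrac12\sum_j\overline{c}_{j+1/2}S^-_{j+1/2}\chi^-_{j+1/2}-\tfrac12\sum_j\overline{c}_{j-1/2}S^+_{j-1/2}\chi^+_{j-1/2},$$ $s_{j+1/2}=\max\{c^-_{j+1/2},c^+_{j+1/2}\}$, and $$\varepsilon_j=\frac{\Delta x_j\,C\,\big(\int_{\Omega_j}\mathrm{Res}^2\,dx\big)^{1/2}}{\big(\int_{\Omega_j}(R_x^2+S_x^2)\,dx\big)^{1/2}+\Delta x_j^\theta},\qquad \mathrm{Res}=(R^2+S^2)_t-\big(c(\psi)(R^2-S^2)\big)_x .$$ Then $$\frac{d}{dt}\left(\sum_{j=1}^N\int_{\Omega_j}\frac{R^2+S^2}{2}\,dx\right)\le 0.$$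
   Context: The domain $\Omega$ is partitioned into cells $\Omega_j=[x_{j-1/2},x_{j+1/2}]$, $j=1,\dots,N$, with $\Delta x_j=x_{j+1/2}-x_{j-1/2}$. $X_{\Delta x}^p(\Omega)=\{u\in L^2(\Omega): u|_{\Omega_j}$ is a polynomial of degree $\le p$ for each $j\}$. For a grid function $u$, $u^+_{j+1/2}$ and $u^-_{j+1/2}$ denote its traces at $x_{j+1/2}$ from the right and left respectively; $\overline{u}_{j+1/2}=(u^+_{j+1/2}+u^-_{j+1/2})/2$ and $\llbracket u\rrbracket_{j+1/2}=u^+_{j+1/2}-u^-_{j+1/2}$. Also $c^\pm_{j+1/2}=c(\psi^\pm_{j+1/2})$ and $\overline{c}_{j+1/2}=(c^+_{j+1/2}+c^-_{j+1/2})/2$. Periodic boundary conditions: the endpoints $x_{1/2}$ and $x_{N+1/2}$ are identified, i.e. $u^-_{1/2}:=u^-_{N+1/2}$ (trace from cell $N$) and $u^+_{N+1/2}:=u^+_{1/2}$ (trace from cell $1$), for all grid functions including $\psi$ and the test functions. *)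

From Stdlib Require Import Reals Lra.
From Coquelicot Require Import Coquelicot.
Open Scope R_scope.

Definition cfun (al be ps : R) : R := sqrt (al * cos ps ^ 2 + be * sin ps ^ 2).

Definition is_poly_deg (p : nat) (f : R -> R) : Prop :=
  exists a : nat -> R, forall x, f x = sum_f_R0 (fun k => a k * x ^ k) p.

(* A grid function: cell index j (meaningful for 1 <= j <= N) |-> the
   restriction of u to Omega_j, extended (as a polynomial) to all of R. *)
Definition grid := nat -> R -> R.

Definition in_X (N p : nat) (u : grid) : Prop :=
  forall j, (1 <= j <= N)%nat -> is_poly_deg p (u j).

Fixpoint sumj (N : nat) (F : nat -> R) : R :=
  match N with O => 0 | S n => sumj n F + F (S n) end.

(* Mesh: xs i = x_{i+1/2}, i = 0..N; Omega_j = [xs (j-1), xs j], j = 1..N. *)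
Definition cellint (xs : nat -> R) (j : nat) (f : R -> R) : R :=
  RInt f (xs (j - 1)%nat) (xs j).

Definition dx (xs : nat -> R) (j : nat) : R := xs j - xs (j - 1)%nat.

(* traces at interface x_{i+1/2}, i = 0..N, with periodic identification *)
Definition tr_minus (N : nat) (xs : nat -> R) (u : grid) (i : nat) : R :=
  if Nat.eqb i 0 then u N (xs N) else u i (xs i).
Definition tr_plus (N : nat) (xs : nat -> R) (u : grid) (i : nat) : R :=
  if Nat.eqb i N then u 1%nat (xs 0%nat) else u (S i) (xs i).
Definition avg N xs (u : grid) i : R := (tr_plus N xs u i + tr_minus N xs u i) / 2.
Definition jump N xs (u : grid) i : R := tr_plus N xs u i - tr_minus N xs u i.

Definition cbar al be N xs (ps : grid) i : R :=
  (cfun al be (tr_plus N xs ps i) + cfun al be (tr_minus N xs ps i)) / 2.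
Definition sint al be N xs (ps : grid) i : R :=
  Rmax (cfun al be (tr_minus N xs ps i)) (cfun al be (tr_plus N xs ps i)).

Definition Bterm al be N xs (r s ps chi : grid) : R :=
  / 2 * sumj N (fun j => cellint xs j
           (fun y => cfun al be (ps j y) * Derive (fun z => r j z * chi j z) y))
  - / 2 * sumj N (fun j => cbar al be N xs ps j * tr_minus N xs r j * tr_minus N xs chi j)
  + / 2 * sumj N (fun j => cbar al be N xs ps (j - 1)%nat * tr_plus N xs r (j - 1)%nat
                             * tr_plus N xs chi (j - 1)%nat)
  - / 2 * sumj N (fun j => cellint xs j
           (fun y => cfun al be (ps j y) * Derive (fun z => s j z * chi j z) y))
  + / 2 * sumj N (fun j => cbar al be N xs ps j * tr_minus N xs s j * tr_minus N xs chi j)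
  - / 2 * sumj N (fun j => cbar al be N xs ps (j - 1)%nat * tr_plus N xs s (j - 1)%nat
                             * tr_plus N xs chi (j - 1)%nat).

Definition dt (U : R -> grid) (t : R) : grid := fun j x => Derive (fun s => U s j x) t.

Definition Res al be (Rf Sf Pf : R -> grid) (t : R) (j : nat) (x : R) : R :=
  Derive (fun s => Rf s j x ^ 2 + Sf s j x ^ 2) t
  - Derive (fun y => cfun al be (Pf t j y) * (Rf t j y ^ 2 - Sf t j y ^ 2)) x.

Definition eps al be (C th : R) (xs : nat -> R) (Rf Sf Pf : R -> grid) (t : R) (j : nat) : R :=
  dx xs j * C * sqrt (cellint xs j (fun x => Res al be Rf Sf Pf t j x ^ 2))
  / (sqrt (cellint xs j (fun x => Derive (Rf t j) x ^ 2 + Derive (Sf t j) x ^ 2))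
     + Rpower (dx xs j) th).

Definition eqR al be C th N xs (Rf Sf Pf : R -> grid) (t : R) (phi : grid) : Prop :=
  let r := Rf t in let s := Sf t in let ps := Pf t in
  sumj N (fun j => cellint xs j (fun x => dt Rf t j x * phi j x))
  + sumj N (fun j => cellint xs j (fun x => cfun al be (ps j x) * r j x * Derive (phi j) x))
  - sumj N (fun j => (cbar al be N xs ps j * avg N xs r j
                      + / 2 * sint al be N xs ps j * jump N xs r j) * tr_minus N xs phi j)
  + sumj N (fun j => (cbar al be N xs ps (j - 1)%nat * avg N xs r (j - 1)%nat
                      + / 2 * sint al be N xs ps (j - 1)%nat * jump N xs r (j - 1)%nat)
                     * tr_plus N xs phi (j - 1)%nat)
  = Bterm al be N xs r s ps phi
    - sumj N (fun j => eps al be C th xs Rf Sf Pf t j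
                       * cellint xs j (fun x => Derive (r j) x * Derive (phi j) x)).

Definition eqS al be C th N xs (Rf Sf Pf : R -> grid) (t : R) (eta : grid) : Prop :=
  let r := Rf t in let s := Sf t in let ps := Pf t in
  sumj N (fun j => cellint xs j (fun x => dt Sf t j x * eta j x))
  - sumj N (fun j => cellint xs j (fun x => cfun al be (ps j x) * s j x * Derive (eta j) x))
  + sumj N (fun j => (cbar al be N xs ps j * avg N xs s j
                      - / 2 * sint al be N xs ps j * jump N xs s j) * tr_minus N xs eta j)
  - sumj N (fun j => (cbar al be N xs ps (j - 1)%nat * avg N xs s (j - 1)%nat
                      - / 2 * sint al be N xs ps (j - 1)%nat * jump N xs s (j - 1)%nat)
                     * tr_plus N xs eta (j - 1)%nat)
  = Bterm al be N xs r s ps eta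
    - sumj N (fun j => eps al be C th xs Rf Sf Pf t j
                       * cellint xs j (fun x => Derive (s j) x * Derive (eta j) x)).

Definition eqPsi N xs (Rf Sf Pf : R -> grid) (t : R) (zeta : grid) : Prop :=
  sumj N (fun j => cellint xs j (fun x => dt Pf t j x * zeta j x))
  = sumj N (fun j => cellint xs j (fun x => (Rf t j x + Sf t j x) / 2 * zeta j x)).

Definition energy N xs (Rf Sf : R -> grid) (t : R) : R :=
  sumj N (fun j => cellint xs j (fun x => (Rf t j x ^ 2 + Sf t j x ^ 2) / 2)).

From Stdlib Require Import Reals Lra Lia.
From Coquelicot Require Import Coquelicot.
Open Scope R_scope.

(* Taking [phi = R] and [eta = S] in the scheme, the volume terms cancel exactly against
   those of [B], since [B(R)] contains [1/2 int c (R^2)_x = int c R R_x]. After the periodic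
   shift of the interface index, the flux terms at each interface combine into
   [- s/2 ([R]^2 + [S]^2)], and the viscous terms are [- eps_j int R_x^2 <= 0]. The energy
   is differentiable in time because the cells are polynomials of degree [<= p]: integrals
   over a cell are exact quadratures of point values, which are differentiable in time. *)

(** * Polynomials in Horner form *)

(* [horner_poly p f]: [f] is a polynomial of degree at most [p], given pointwise by its
   Horner scheme so that no function extensionality is needed. *)
Inductive horner_poly : nat -> (R -> R) -> Prop :=
| horner_poly_cst c f : (forall x, f x = c) -> horner_poly 0 f
| horner_poly_step p g c f :
    horner_poly p g -> (forall x, f x = c + x * g x) -> horner_poly (S p) f.

Lemma horner_poly_ext p f g :
  horner_poly p f -> (forall x, f x = g x) -> horner_poly p g.
Proof.
  intros [c f' Hf | p' h c f' Hh Hf] E.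
  - apply (horner_poly_cst c); intros x; rewrite <- E; auto.
  - apply (horner_poly_step p' h c); auto; intros x; rewrite <- E; auto.
Qed.

Lemma horner_poly_succ p f : horner_poly p f -> horner_poly (S p) f.
Proof.
  induction 1 as [c f Hf | p g c f Hg IH Hf].
  - apply (horner_poly_step 0 (fun _ => 0) c); [now apply (horner_poly_cst 0)|].
    intros x; rewrite Hf; ring.
  - now apply (horner_poly_step (S p) g c).
Qed.

Lemma horner_poly_weaken p q f :
  (p <= q)%nat -> horner_poly p f -> horner_poly q f.
Proof. induction 1; auto using horner_poly_succ. Qed.

Lemma horner_poly_const p c : horner_poly p (fun _ => c).
Proof.
  apply horner_poly_weaken with 0%nat; [lia|].
  now apply (horner_poly_cst c).
Qed.

Lemma horner_poly_plus p f g :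
  horner_poly p f -> horner_poly p g -> horner_poly p (fun x => f x + g x).
Proof.
  intros Hf; revert g.
  induction Hf as [c f Hf | p h c f Hh IH Hf]; intros g Hg;
    inversion Hg as [c' g' Hc' | p' h' c' g' Hh' Hg']; subst.
  - apply (horner_poly_cst (c + c')); intros x; rewrite Hf, Hc'; auto.
  - apply (horner_poly_step p (fun x => h x + h' x) (c + c')); auto.
    intros x; rewrite Hf, Hg'; ring.
Qed.

Lemma horner_poly_scal p k f :
  horner_poly p f -> horner_poly p (fun x => k * f x).
Proof.
  induction 1 as [c f Hf | p g c f Hg IH Hf].
  - apply (horner_poly_cst (k * c)); intros x; rewrite Hf; auto.
  - apply (horner_poly_step p (fun x => k * g x) (k * c)); auto.
    intros x; rewrite Hf; ring.
Qed.

Lemma horner_poly_mul p q f g :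
  horner_poly p f -> horner_poly q g -> horner_poly (p + q) (fun x => f x * g x).
Proof.
  intros Hf Hg; induction Hf as [c f Hf | p h c f Hh IH Hf]; simpl.
  - apply horner_poly_ext with (fun x => c * g x); auto using horner_poly_scal.
    intros x; rewrite Hf; auto.
  - apply horner_poly_ext with (fun x => c * g x + (0 + x * (h x * g x))).
    + apply horner_poly_plus.
      * apply horner_poly_weaken with q; [lia|]; now apply horner_poly_scal.
      * now apply (horner_poly_step (p + q) (fun x => h x * g x) 0).
    + intros x; rewrite Hf; ring.
Qed.

Lemma horner_poly_sum p n (F : nat -> R -> R) :
  (forall i, (i <= n)%nat -> horner_poly p (F i)) ->
  horner_poly p (fun x => sum_f_R0 (fun i => F i x) n).
Proof.
  induction n as [|n IH]; intros HF; simpl; auto.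
  apply horner_poly_plus; auto.
Qed.

Lemma is_poly_deg_horner p f : is_poly_deg p f -> horner_poly p f.
Proof.
  revert f; induction p as [|p IH]; intros f [a Ha].
  - apply (horner_poly_cst (a 0%nat)); intros x; rewrite Ha; simpl; ring.
  - apply (horner_poly_step p (fun x => sum_f_R0 (fun k => a (S k) * x ^ k) p) (a 0%nat)).
    + apply IH; now exists (fun k => a (S k)).
    + intros x; rewrite Ha, decomp_sum by lia; simpl pred; rewrite scal_sum.
      f_equal; [simpl; ring|]; apply sum_eq; intros; simpl; ring.
Qed.

Lemma horner_poly_factor p f z : horner_poly p f ->
  exists h, horner_poly (pred p) h /\ forall x, f x - f z = (x - z) * h x.
Proof.
  induction 1 as [c f Hf | p g c f Hg IH Hf].
  - exists (fun _ => 0); split; [apply horner_poly_const|].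
    intros x; rewrite !Hf; ring.
  - destruct IH as [h [Hh E]]; exists (fun x => g x + z * h x); split.
    + apply horner_poly_plus; auto; apply horner_poly_scal.
      apply horner_poly_weaken with (pred p); auto; lia.
    + intros x; rewrite !Hf.
      transitivity ((x - z) * g x + z * (g x - g z)); [ring|]; rewrite E; ring.
Qed.

Lemma horner_poly_nodes_eq0 p f :
  horner_poly p f -> (forall i, (i <= p)%nat -> f (INR i) = 0) -> forall x, f x = 0.
Proof.
  revert f; induction p as [|p IH]; intros f Hf Hnodes x.
  - inversion Hf as [c f' Hc| ]; subst.
    rewrite Hc, <- (Hc (INR 0)); apply Hnodes; lia.
  - destruct (horner_poly_factor _ _ (INR (S p)) Hf) as [h [Hh E]].
    assert (Hlast : f (INR (S p)) = 0) by (apply Hnodes; lia).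
    assert (Hh0 : forall y, h y = 0).
    { apply IH; auto; intros i Hi.
      specialize (E (INR i)); rewrite Hnodes, Hlast in E by lia.
      assert (INR i <> INR (S p)) by (intros Heq; apply INR_eq in Heq; lia).
      destruct (Rmult_integral (INR i - INR (S p)) (h (INR i))); auto; lra. }
    specialize (E x); rewrite Hh0, Hlast in E; lra.
Qed.

(** * Lagrange interpolation and exact quadrature *)

Fixpoint lagrange (i m : nat) (x : R) : R :=
  match m with
  | O => 1
  | S k => lagrange i k x * (if Nat.eqb k i then 1 else (x - INR k) / (INR i - INR k))
  end.

Lemma horner_poly_lagrange_factor i k : k <> i ->
  horner_poly 1 (fun x => (x - INR k) / (INR i - INR k)).
Proof.
  intros Hki.
  apply (horner_poly_step 0 (fun _ => / (INR i - INR k)) (- INR k / (INR i - INR k))).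
  - apply horner_poly_const.
  - intros x; unfold Rdiv; ring.
Qed.

Lemma horner_poly_lagrange_le i m : (m <= i)%nat -> horner_poly m (lagrange i m).
Proof.
  induction m as [|m IH]; intros Hm; simpl; [apply horner_poly_const|].
  destruct (Nat.eqb_spec m i) as [|Hmi]; [lia|].
  replace (S m) with (m + 1)%nat by lia.
  apply horner_poly_mul; auto using horner_poly_lagrange_factor with arith.
Qed.

Lemma horner_poly_lagrange i m : (i < m)%nat -> horner_poly (m - 1) (lagrange i m).
Proof.
  induction m as [|m IH]; intros Hm; [lia|]; simpl; rewrite Nat.sub_0_r.
  destruct (Nat.eqb_spec m i) as [<-|Hmi].
  - apply horner_poly_ext with (lagrange m m); [apply horner_poly_lagrange_le; lia|].
    intros; ring.
  - replace m with ((m - 1) + 1)%nat at 1 by lia.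
    apply horner_poly_mul; [apply IH; lia | now apply horner_poly_lagrange_factor].
Qed.

Lemma lagrange_node_self i m : lagrange i m (INR i) = 1.
Proof.
  induction m as [|m IH]; simpl; auto; rewrite IH.
  destruct (Nat.eqb_spec m i) as [|Hmi]; [ring|].
  field; intros Heq; apply Hmi, INR_eq; lra.
Qed.

Lemma lagrange_node_other i m k : (k < m)%nat -> k <> i -> lagrange i m (INR k) = 0.
Proof.
  induction m as [|m IH]; intros Hk Hki; [lia|]; simpl.
  destruct (Nat.eq_dec k m) as [->|Hkm].
  - destruct (Nat.eqb_spec m i); [lia|]; unfold Rdiv; ring.
  - rewrite IH by lia; ring.
Qed.

Lemma sum_lagrange_node (c : nat -> R) q n k : (k <= q)%nat ->
  sum_f_R0 (fun i => c i * lagrange i (S q) (INR k)) n = if (k <=? n)%nat then c k else 0.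
Proof.
  intros Hk; induction n as [|n IH]; cbn [sum_f_R0].
  - destruct k; [rewrite lagrange_node_self; simpl; ring|].
    rewrite lagrange_node_other by lia; simpl; ring.
  - rewrite IH; destruct (Nat.eq_dec k (S n)) as [->|Hkn].
    + rewrite lagrange_node_self, (proj2 (Nat.leb_gt (S n) n)), Nat.leb_refl by lia; ring.
    + rewrite lagrange_node_other by lia.
      destruct (Nat.leb_spec k n), (Nat.leb_spec k (S n)); try lia; ring.
Qed.

Lemma horner_poly_interpolation q f : horner_poly q f ->
  forall x, f x = sum_f_R0 (fun i => f (INR i) * lagrange i (S q) x) q.
Proof.
  intros Hf x.
  enough (E : forall y, f y + -1 * sum_f_R0 (fun i => f (INR i) * lagrange i (S q) y) q = 0)
    by (specialize (E x); lra).
  apply (horner_poly_nodes_eq0 q).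
  - apply horner_poly_plus; auto; apply horner_poly_scal, horner_poly_sum.
    intros i Hi; apply horner_poly_scal.
    replace q with (S q - 1)%nat at 1 by lia; apply horner_poly_lagrange; lia.
  - intros i Hi; rewrite sum_lagrange_node, (proj2 (Nat.leb_le i q)) by lia; ring.
Qed.

Lemma horner_poly_continuous p f : horner_poly p f -> forall x, continuous f x.
Proof.
  induction 1 as [c f Hf | p g c f Hg IH Hf]; intros x.
  - apply continuous_ext with (fun _ => c); auto using continuous_const.
  - apply continuous_ext with (fun y => plus c (mult y (g y))).
    { intros y; rewrite Hf; reflexivity. }
    apply (continuous_plus (fun _ : R => c)); [apply continuous_const|].
    apply (continuous_mult (fun y : R => y)); auto using continuous_id.
Qed.

Lemma horner_poly_ex_RInt p f a b : horner_poly p f -> ex_RInt f a b.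
Proof.
  intros Hf; apply (ex_RInt_continuous (V := R_CompleteNormedModule)).
  intros; eapply horner_poly_continuous; eauto.
Qed.

Lemma RInt_sum_f_R0 n (c : nat -> R) (L : nat -> R -> R) a b :
  (forall i, ex_RInt (L i) a b) ->
  RInt (fun x => sum_f_R0 (fun i => c i * L i x) n) a b
  = sum_f_R0 (fun i => c i * RInt (L i) a b) n.
Proof.
  intros HL.
  assert (Hex : forall n, ex_RInt (fun x => sum_f_R0 (fun i => c i * L i x) n) a b).
  { induction n0 as [|n0 IH]; simpl.
    - exact (ex_RInt_scal (L 0%nat) a b (c 0%nat) (HL 0%nat)).
    - exact (ex_RInt_plus _ (fun x => scal (c (S n0)) (L (S n0) x)) a b IH
               (ex_RInt_scal (L (S n0)) a b (c (S n0)) (HL _))). }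
  induction n as [|n IH]; simpl.
  - exact (RInt_scal (L 0%nat) a b (c 0%nat) (HL 0%nat)).
  - rewrite <- IH.
    replace (c (S n) * RInt (L (S n)) a b) with (RInt (fun x => c (S n) * L (S n) x) a b)
      by exact (RInt_scal (L (S n)) a b (c (S n)) (HL (S n))).
    exact (RInt_plus _ (fun x => scal (c (S n)) (L (S n) x)) a b (Hex n)
             (ex_RInt_scal _ a b _ (HL (S n)))).
Qed.

Lemma horner_poly_quadrature q f a b : horner_poly q f ->
  RInt f a b = sum_f_R0 (fun i => f (INR i) * RInt (lagrange i (S q)) a b) q.
Proof.
  intros Hf; rewrite <- RInt_sum_f_R0.
  - apply RInt_ext; intros; now apply horner_poly_interpolation.
  - intros i; destruct (Compare_dec.le_lt_dec i q).
    + apply horner_poly_ex_RInt with (S q - 1)%nat; apply horner_poly_lagrange; lia.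
    + apply horner_poly_ex_RInt with (S q); apply horner_poly_lagrange_le; lia.
Qed.

Lemma horner_poly_is_derive p f : horner_poly p f ->
  exists g, horner_poly p g /\ forall x, is_derive f x (g x).
Proof.
  induction 1 as [c f Hf | p g c f Hg [g' [Hg' Dg]] Hf].
  - exists (fun _ => 0); split; [apply horner_poly_const|].
    intros x; apply is_derive_ext with (fun _ => c); auto.
    apply (is_derive_const c).
  - exists (fun x => g x + x * g' x); split.
    + apply horner_poly_plus; [now apply horner_poly_succ|].
      now apply (horner_poly_step p g' 0); [|intros; ring].
    + intros x; apply is_derive_ext with (fun y => c + y * g y); [intros; auto|].
      specialize (Dg x); rewrite is_derive_Reals in *.
      replace (g x + x * g' x) with (0 + (1 * g x + x * g' x)) by ring.
      apply derivable_pt_lim_plus, derivable_pt_lim_mult; auto.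
      + apply derivable_pt_lim_const.
      + apply derivable_pt_lim_id.
Qed.

Lemma horner_poly_ex_derive p f x : horner_poly p f -> ex_derive f x.
Proof.
  intros Hf; destruct (horner_poly_is_derive p f Hf) as [g [_ Dg]].
  now exists (g x).
Qed.

Lemma horner_poly_Derive_continuous p f x : horner_poly p f -> continuous (Derive f) x.
Proof.
  intros Hf; destruct (horner_poly_is_derive p f Hf) as [g [Hg Dg]].
  apply continuous_ext with g; [intros; symmetry; now apply is_derive_unique|].
  eapply horner_poly_continuous; eauto.
Qed.

Lemma is_derive_sum_f_R0 n (f : nat -> R -> R) (d : nat -> R) t :
  (forall i, (i <= n)%nat -> is_derive (f i) t (d i)) ->
  is_derive (fun s => sum_f_R0 (fun i => f i s) n) t (sum_f_R0 d n).
Proof.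
  induction n as [|n IH]; intros Hd; simpl; [apply Hd; lia|].
  rewrite is_derive_Reals; apply derivable_pt_lim_plus; rewrite <- is_derive_Reals.
  - apply IH; intros; apply Hd; lia.
  - apply Hd; lia.
Qed.

Lemma is_derive_half_sum_squares (f g : R -> R) t :
  ex_derive f t -> ex_derive g t ->
  is_derive (fun s => (f s ^ 2 + g s ^ 2) / 2) t (Derive f t * f t + Derive g t * g t).
Proof.
  intros Df%Derive_correct Dg%Derive_correct.
  apply is_derive_ext with (fun s => / 2 * (f s * f s + g s * g s)); [intros s; simpl; field|].
  rewrite is_derive_Reals in *.
  replace (Derive f t * f t + Derive g t * g t) with
    (/ 2 * ((Derive f t * f t + f t * Derive f t) + (Derive g t * g t + g t * Derive g t)))
    by field.
  apply (derivable_pt_lim_scal (fun s => f s * f s + g s * g s)).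
  apply (derivable_pt_lim_plus (fun s => f s * f s) (fun s => g s * g s));
    now apply derivable_pt_lim_mult.
Qed.

Section PolynomialFamily.

Variables (q : nat) (F : R -> R -> R) (G : R -> R) (t : R).
Hypothesis F_poly : locally t (fun s => horner_poly q (F s)).
Hypothesis F_derive : forall x, is_derive (fun s => F s x) t (G x).

Lemma is_derive_nodal_sum (w : nat -> R) :
  is_derive (fun s => sum_f_R0 (fun i => F s (INR i) * w i) q) t
    (sum_f_R0 (fun i => G (INR i) * w i) q).
Proof.
  apply (is_derive_sum_f_R0 q (fun i s => F s (INR i) * w i)); intros i _.
  exact (is_derive_scal_l (fun s => F s (INR i)) t (G (INR i)) (w i) (F_derive (INR i))).
Qed.

Lemma horner_poly_time_derivative : horner_poly q G.
Proof.
  apply horner_poly_ext with (fun x => sum_f_R0 (fun i => G (INR i) * lagrange i (S q) x) q).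
  { apply horner_poly_sum; intros i Hi; apply horner_poly_scal.
    replace q with (S q - 1)%nat at 1 by lia; apply horner_poly_lagrange; lia. }
  intros x; rewrite <- (is_derive_unique _ _ _ (F_derive x)); symmetry.
  apply is_derive_unique.
  apply is_derive_ext_loc with (fun s => sum_f_R0 (fun i => F s (INR i) * lagrange i (S q) x) q).
  - apply filter_imp with (2 := F_poly); intros s Hs.
    symmetry; now apply horner_poly_interpolation.
  - apply is_derive_nodal_sum.
Qed.

Lemma is_derive_RInt_horner_family a b :
  is_derive (fun s => RInt (F s) a b) t (RInt G a b).
Proof.
  rewrite (horner_poly_quadrature q G) by apply horner_poly_time_derivative.
  apply is_derive_ext_loc
    with (fun s => sum_f_R0 (fun i => F s (INR i) * RInt (lagrange i (S q)) a b) q).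
  - apply filter_imp with (2 := F_poly); intros s Hs.
    symmetry; now apply horner_poly_quadrature.
  - apply is_derive_nodal_sum.
Qed.

End PolynomialFamily.

(** * Sums over cells and periodic interfaces *)

Lemma sumj_ext n F G : (forall j, (1 <= j <= n)%nat -> F j = G j) -> sumj n F = sumj n G.
Proof.
  induction n as [|n IH]; intros H; simpl; auto.
  rewrite IH, H; auto; [lia|]; intros; apply H; lia.
Qed.

Lemma sumj_nonneg n F : (forall j, (1 <= j <= n)%nat -> 0 <= F j) -> 0 <= sumj n F.
Proof.
  induction n as [|n IH]; intros H; simpl; [lra|].
  assert (0 <= F (S n)) by (apply H; lia).
  assert (0 <= sumj n F) by (apply IH; intros; apply H; lia).
  lra.
Qed.

Lemma sumj_plus n F G : sumj n (fun j => F j + G j) = sumj n F + sumj n G.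
Proof. induction n as [|n IH]; simpl; [ring|]; rewrite IH; ring. Qed.

Lemma sumj_scal n k F : sumj n (fun j => k * F j) = k * sumj n F.
Proof. induction n as [|n IH]; simpl; [ring|]; rewrite IH; ring. Qed.

Lemma sumj_shift n G : G 0%nat = G n -> sumj n (fun j => G (j - 1)%nat) = sumj n G.
Proof.
  intros HG.
  assert (E : forall m, sumj m (fun j => G (j - 1)%nat) + G m = G 0%nat + sumj m G).
  { induction m as [|m IH]; simpl; [ring|]; rewrite Nat.sub_0_r; lra. }
  specialize (E n); lra.
Qed.

Lemma is_derive_sumj n (F : nat -> R -> R) (d : nat -> R) t :
  (forall j, (1 <= j <= n)%nat -> is_derive (F j) t (d j)) ->
  is_derive (fun s => sumj n (fun j => F j s)) t (sumj n d).
Proof.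
  induction n as [|n IH]; intros Hd; simpl; [apply (is_derive_const 0)|].
  rewrite is_derive_Reals; apply derivable_pt_lim_plus; rewrite <- is_derive_Reals.
  - apply IH; intros; apply Hd; lia.
  - apply Hd; lia.
Qed.

Lemma tr_minus_periodic N xs u : tr_minus N xs u 0 = tr_minus N xs u N.
Proof. unfold tr_minus; simpl; now destruct (Nat.eqb N 0). Qed.

Lemma tr_plus_periodic N xs u : tr_plus N xs u 0 = tr_plus N xs u N.
Proof. unfold tr_plus; rewrite Nat.eqb_refl; now destruct (Nat.eqb 0 N). Qed.

Local Ltac interface_periodic :=
  unfold avg, jump, cbar, sint; rewrite ?tr_minus_periodic, ?tr_plus_periodic; reflexivity.

Section InterfaceFluxes.

Variables (al be : R) (N : nat) (xs : nat -> R) (r s ps : grid).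

Local Notation cb := (cbar al be N xs ps).
Local Notation sg := (sint al be N xs ps).
Local Notation trm := (tr_minus N xs).
Local Notation trp := (tr_plus N xs).
Local Notation flux_r i := (cb i * avg N xs r i + / 2 * sg i * jump N xs r i).
Local Notation flux_s i := (cb i * avg N xs s i - / 2 * sg i * jump N xs s i).

Lemma interface_flux_dissipation_aligned n :
  sumj n (fun i => flux_r i * trm r i) - sumj n (fun i => flux_r i * trp r i)
  - sumj n (fun i => flux_s i * trm s i) + sumj n (fun i => flux_s i * trp s i)
  - / 2 * sumj n (fun i => cb i * trm r i * trm r i)
  + / 2 * sumj n (fun i => cb i * trp r i * trp r i)
  + / 2 * sumj n (fun i => cb i * trm s i * trm r i)
  - / 2 * sumj n (fun i => cb i * trp s i * trp r i)
  - / 2 * sumj n (fun i => cb i * trm r i * trm s i)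
  + / 2 * sumj n (fun i => cb i * trp r i * trp s i)
  + / 2 * sumj n (fun i => cb i * trm s i * trm s i)
  - / 2 * sumj n (fun i => cb i * trp s i * trp s i)
  = - sumj n (fun i => sg i / 2 * (jump N xs r i ^ 2 + jump N xs s i ^ 2)).
Proof.
  induction n as [|n IH]; cbn [sumj]; [ring|].
  unfold avg, jump in *; lra.
Qed.

Lemma interface_flux_dissipation :
  sumj N (fun j => flux_r j * trm r j)
  - sumj N (fun j => flux_r (j - 1)%nat * trp r (j - 1)%nat)
  - sumj N (fun j => flux_s j * trm s j)
  + sumj N (fun j => flux_s (j - 1)%nat * trp s (j - 1)%nat)
  - / 2 * sumj N (fun j => cb j * trm r j * trm r j)
  + / 2 * sumj N (fun j => cb (j - 1)%nat * trp r (j - 1)%nat * trp r (j - 1)%nat)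
  + / 2 * sumj N (fun j => cb j * trm s j * trm r j)
  - / 2 * sumj N (fun j => cb (j - 1)%nat * trp s (j - 1)%nat * trp r (j - 1)%nat)
  - / 2 * sumj N (fun j => cb j * trm r j * trm s j)
  + / 2 * sumj N (fun j => cb (j - 1)%nat * trp r (j - 1)%nat * trp s (j - 1)%nat)
  + / 2 * sumj N (fun j => cb j * trm s j * trm s j)
  - / 2 * sumj N (fun j => cb (j - 1)%nat * trp s (j - 1)%nat * trp s (j - 1)%nat)
  = - sumj N (fun i => sg i / 2 * (jump N xs r i ^ 2 + jump N xs s i ^ 2)).
Proof.
  rewrite (sumj_shift N (fun i => flux_r i * trp r i)),
    (sumj_shift N (fun i => flux_s i * trp s i)),
    (sumj_shift N (fun i => cb i * trp r i * trp r i)),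
    (sumj_shift N (fun i => cb i * trp s i * trp r i)),
    (sumj_shift N (fun i => cb i * trp r i * trp s i)),
    (sumj_shift N (fun i => cb i * trp s i * trp s i)) by interface_periodic.
  apply interface_flux_dissipation_aligned.
Qed.

End InterfaceFluxes.

(** * Energy balance of the scheme *)

Lemma cfun_continuous al be z : continuous (cfun al be) z.
Proof.
  unfold cfun; apply continuous_sqrt_comp.
  apply (ex_derive_continuous (K := R_AbsRing) (V := R_NormedModule)); auto_derive; auto.
Qed.

Lemma RInt_weighted_Derive_square (w u : R -> R) a b :
  (forall x, continuous w x) -> (forall x, ex_derive u x) ->
  (forall x, continuous (Derive u) x) ->
  RInt (fun y => w y * Derive (fun z => u z * u z) y) a b
  = 2 * RInt (fun y => w y * u y * Derive u y) a b.
Proof.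
  intros Hw Hu Hu'.
  transitivity (RInt (fun y => scal 2 (w y * u y * Derive u y)) a b).
  { apply RInt_ext; intros x _; rewrite Derive_mult by auto.
    unfold scal; simpl; unfold mult; simpl; ring. }
  apply (RInt_scal (fun y => w y * u y * Derive u y)).
  apply (ex_RInt_continuous (V := R_CompleteNormedModule)); intros z _.
  apply (continuous_mult (fun y => w y * u y) (Derive u)); auto.
  apply (continuous_mult w u); auto.
  now apply (ex_derive_continuous (K := R_AbsRing) (V := R_NormedModule)).
Qed.

Lemma sumj_volume_square al be N xs p (ps u : grid) :
  (forall j, (1 <= j <= N)%nat -> horner_poly p (ps j) /\ horner_poly p (u j)) ->
  sumj N (fun j => cellint xs j (fun y => cfun al be (ps j y) * Derive (fun z => u j z * u j z) y))
  = 2 * sumj N (fun j => cellint xs j (fun x => cfun al be (ps j x) * u j x * Derive (u j) x)).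
Proof.
  intros Hpoly; rewrite <- sumj_scal; apply sumj_ext; intros j Hj.
  destruct (Hpoly j Hj) as [Hps Hu]; apply RInt_weighted_Derive_square.
  - intros x; apply (continuous_comp (ps j) (cfun al be)); [|apply cfun_continuous].
    eapply horner_poly_continuous; eauto.
  - intros; eapply horner_poly_ex_derive; eauto.
  - intros; eapply horner_poly_Derive_continuous; eauto.
Qed.

Lemma energy_balance al be C th N xs p (Rf Sf Pf : R -> grid) t :
  (forall j, (1 <= j <= N)%nat ->
     horner_poly p (Rf t j) /\ horner_poly p (Sf t j) /\ horner_poly p (Pf t j)) ->
  eqR al be C th N xs Rf Sf Pf t (Rf t) -> eqS al be C th N xs Rf Sf Pf t (Sf t) ->
  sumj N (fun j => cellint xs j (fun x => dt Rf t j x * Rf t j x)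
                   + cellint xs j (fun x => dt Sf t j x * Sf t j x))
  = - sumj N (fun j => eps al be C th xs Rf Sf Pf t j
                       * cellint xs j (fun x => Derive (Rf t j) x * Derive (Rf t j) x))
    - sumj N (fun j => eps al be C th xs Rf Sf Pf t j
                       * cellint xs j (fun x => Derive (Sf t j) x * Derive (Sf t j) x))
    - sumj N (fun i => sint al be N xs (Pf t) i / 2
                       * (jump N xs (Rf t) i ^ 2 + jump N xs (Sf t) i ^ 2)).
Proof.
  intros Hpoly ER ES; unfold eqR, eqS, Bterm in ER, ES; cbv zeta in ER, ES.
  rewrite (sumj_volume_square al be N xs p (Pf t) (Rf t)) in ER
    by (intros j Hj; destruct (Hpoly j Hj) as [? [? ?]]; auto).
  rewrite (sumj_volume_square al be N xs p (Pf t) (Sf t)) in ES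
    by (intros j Hj; destruct (Hpoly j Hj) as [? [? ?]]; auto).
  assert (Hsym : sumj N (fun j => cellint xs j
                   (fun y => cfun al be (Pf t j y) * Derive (fun z => Sf t j z * Rf t j z) y))
               = sumj N (fun j => cellint xs j
                   (fun y => cfun al be (Pf t j y) * Derive (fun z => Rf t j z * Sf t j z) y))).
  { apply sumj_ext; intros j _; apply RInt_ext; intros x _.
    f_equal; apply Derive_ext; intros; ring. }
  pose proof (interface_flux_dissipation al be N xs (Rf t) (Sf t) (Pf t)).
  rewrite sumj_plus; lra.
Qed.

Lemma eps_nonneg al be C th xs (Rf Sf Pf : R -> grid) t j :
  0 <= dx xs j -> 0 <= C -> 0 <= eps al be C th xs Rf Sf Pf t j.
Proof.
  intros Hdx HC; unfold eps, Rdiv.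
  assert (0 < Rpower (dx xs j) th) by apply exp_pos.
  assert (0 <= sqrt (cellint xs j (fun x => Derive (Rf t j) x ^ 2 + Derive (Sf t j) x ^ 2)))
    by apply sqrt_pos.
  apply Rmult_le_pos; [apply Rmult_le_pos; [now apply Rmult_le_pos|apply sqrt_pos]|].
  apply Rlt_le, Rinv_0_lt_compat; lra.
Qed.

Lemma viscosity_nonneg al be C th N xs p (Rf Sf Pf : R -> grid) t (u : grid) :
  0 <= C -> (forall i, (i < N)%nat -> xs i < xs (S i)) ->
  (forall j, (1 <= j <= N)%nat -> horner_poly p (u j)) ->
  0 <= sumj N (fun j => eps al be C th xs Rf Sf Pf t j
                        * cellint xs j (fun x => Derive (u j) x * Derive (u j) x)).
Proof.
  intros HC Hxs Hu; apply sumj_nonneg; intros j Hj.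
  assert (Hcell : xs (j - 1)%nat < xs j).
  { replace j with (S (j - 1)) at 2 by lia; apply Hxs; lia. }
  apply Rmult_le_pos; [apply eps_nonneg; unfold dx; lra|].
  unfold cellint; apply RInt_ge_0; [lra| |intros; apply Rle_0_sqr].
  apply (ex_RInt_continuous (V := R_CompleteNormedModule)); intros z _.
  apply (continuous_mult (Derive (u j)) (Derive (u j)));
    eapply horner_poly_Derive_continuous; eauto.
Qed.

Lemma jump_dissipation_nonneg al be N xs (r s ps : grid) :
  0 <= sumj N (fun i => sint al be N xs ps i / 2 * (jump N xs r i ^ 2 + jump N xs s i ^ 2)).
Proof.
  apply sumj_nonneg; intros i _.
  assert (0 <= sint al be N xs ps i).
  { unfold sint, cfun; eapply Rle_trans; [apply sqrt_pos|apply Rmax_l]. }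
  pose proof (pow2_ge_0 (jump N xs r i)); pose proof (pow2_ge_0 (jump N xs s i)).
  apply Rmult_le_pos; lra.
Qed.

Lemma is_derive_energy N xs p (Rf Sf : R -> grid) t :
  (forall j, (1 <= j <= N)%nat ->
     locally t (fun s => horner_poly p (Rf s j) /\ horner_poly p (Sf s j))) ->
  (forall j x, (1 <= j <= N)%nat ->
     ex_derive (fun s => Rf s j x) t /\ ex_derive (fun s => Sf s j x) t) ->
  is_derive (energy N xs Rf Sf) t
    (sumj N (fun j => cellint xs j (fun x => dt Rf t j x * Rf t j x)
                      + cellint xs j (fun x => dt Sf t j x * Sf t j x))).
Proof.
  intros Hpoly Hder; unfold energy.
  apply (is_derive_sumj N (fun j s => cellint xs j (fun x => (Rf s j x ^ 2 + Sf s j x ^ 2) / 2)));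
    intros j Hj.
  assert (HdR : horner_poly p (dt Rf t j)).
  { apply (horner_poly_time_derivative p (fun s => Rf s j) _ t).
    - apply filter_imp with (2 := Hpoly j Hj); tauto.
    - intros x; apply Derive_correct, Hder; auto. }
  assert (HdS : horner_poly p (dt Sf t j)).
  { apply (horner_poly_time_derivative p (fun s => Sf s j) _ t).
    - apply filter_imp with (2 := Hpoly j Hj); tauto.
    - intros x; apply Derive_correct, Hder; auto. }
  destruct (locally_singleton _ _ (Hpoly j Hj)) as [HR HS].
  unfold cellint.
  replace (RInt (fun x => dt Rf t j x * Rf t j x) _ _ + RInt (fun x => dt Sf t j x * Sf t j x) _ _)
    with (RInt (fun x => dt Rf t j x * Rf t j x + dt Sf t j x * Sf t j x) (xs (j - 1)%nat) (xs j)).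
  2: { apply (RInt_plus (V := R_CompleteNormedModule));
       apply horner_poly_ex_RInt with (p + p)%nat; now apply horner_poly_mul. }
  apply (is_derive_RInt_horner_family (p + p) _ _ t).
  - apply filter_imp with (2 := Hpoly j Hj); intros s [HRs HSs].
    apply horner_poly_ext with (fun x => / 2 * (Rf s j x * Rf s j x + Sf s j x * Sf s j x)).
    + apply horner_poly_scal, horner_poly_plus; now apply horner_poly_mul.
    + intros; field.
  - intros x; destruct (Hder j x Hj); now apply is_derive_half_sum_squares.
Qed.

Theorem proposition2p2 :
  forall (al be C th T : R) (p N : nat) (xs : nat -> R) (Rf Sf Pf : R -> grid),
    0 < al -> 0 < be -> 0 < C -> / 2 <= th -> 0 < T ->
    (1 <= N)%nat ->
    (forall i, (i < N)%nat -> xs i < xs (S i)) ->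
    (forall t, 0 <= t <= T -> in_X N p (Rf t) /\ in_X N p (Sf t) /\ in_X N p (Pf t)) ->
    (forall t j x, 0 <= t <= T -> (1 <= j <= N)%nat ->
       ex_derive (fun s => Rf s j x) t /\ ex_derive (fun s => Sf s j x) t
       /\ ex_derive (fun s => Pf s j x) t) ->
    (forall t, 0 <= t <= T -> forall phi, in_X N p phi -> eqR al be C th N xs Rf Sf Pf t phi) ->
    (forall t, 0 <= t <= T -> forall eta, in_X N p eta -> eqS al be C th N xs Rf Sf Pf t eta) ->
    (forall t, 0 <= t <= T -> forall zeta, in_X N p zeta -> eqPsi N xs Rf Sf Pf t zeta) ->
    forall t, 0 < t < T ->
      exists l, is_derive (energy N xs Rf Sf) t l /\ l <= 0.
Proof.
  intros al be C th T p N xs Rf Sf Pf _ _ HC _ _ _ Hxs HX HD HeqR HeqS _ t Ht.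
  assert (Ht' : 0 <= t <= T) by lra.
  assert (Hcells : forall s, 0 <= s <= T -> forall j, (1 <= j <= N)%nat ->
            horner_poly p (Rf s j) /\ horner_poly p (Sf s j) /\ horner_poly p (Pf s j)).
  { intros s Hs j Hj; destruct (HX s Hs) as [XR [XS XP]].
    repeat split; apply is_poly_deg_horner; auto. }
  eexists; split.
  - apply (is_derive_energy N xs p).
    + intros j Hj; apply locally_interval with 0 T; simpl; try lra.
      intros s Hs0 HsT; destruct (Hcells s (conj (Rlt_le _ _ Hs0) (Rlt_le _ _ HsT)) j Hj); tauto.
    + intros j x Hj; destruct (HD t j x Ht' Hj); tauto.
  - destruct (HX t Ht') as [XR [XS _]].
    rewrite (energy_balance al be C th N xs p Rf Sf Pf t (Hcells t Ht')
               (HeqR t Ht' _ XR) (HeqS t Ht' _ XS)).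
    assert (HC' : 0 <= C) by lra.
    pose proof (viscosity_nonneg al be C th N xs p Rf Sf Pf t (Rf t) HC' Hxs
                  (fun j Hj => proj1 (Hcells t Ht' j Hj))).
    pose proof (viscosity_nonneg al be C th N xs p Rf Sf Pf t (Sf t) HC' Hxs
                  (fun j Hj => proj1 (proj2 (Hcells t Ht' j Hj)))).
    pose proof (jump_dissipation_nonneg al be N xs (Rf t) (Sf t) (Pf t)).
    lra.
Qed.
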